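(* Let $H$ be a finitely generated free abelian group. Then \[\ker\big(\mathrm{id}+*:\mathcal{P}(H)\to\mathcal{P}(H)\big)=\mathrm{im}\big(\mathrm{id}-*:\mathcal{P}(H)\to\mathcal{P}(H)\big)\] and \[\ker\big(\mathrm{id}+*:\mathcal{P}_T(H)\to\mathcal{P}_T(H)\big)=\mathrm{im}\big(\mathrm{id}-*:\mathcal{P}_T(H)\to\mathcal{P}_T(H)\big).\]
   Context: $V_H=H\otimes_{\mathbb{Z}}\mathbb{R}$. An integral polytope is the convex hull of a nonempty finite subset of $H\subseteq V_H$. $\mathcal{P}(H)$ is the Grothendieck group of the monoid of integral polytopes under Minkowski sum, and $\mathcal{P}_T(H)$ is the cokernel of $H\to\mathcal{P}(H)$, $h\mapsto\{h\}$. The involution $*$ is induced by $P\mapsto *P=\{-p:p\in P\}$, i.e. $*(P-Q)=*P-*Q$, on both groups. *)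

From HB Require Import structures.
From mathcomp Require Import all_boot all_order all_algebra.
Set Implicit Arguments. Unset Strict Implicit. Unset Printing Implicit Defensive.
Import Order.TTheory GRing.Theory Num.Theory.
Local Open Scope ring_scope.

(* H = Z^n (every f.g. free abelian group is isomorphic to some Z^n),
   realised as 'rV[int]_n; V_H = H (x) R = 'rV[R]_n.  Subsets of V_H are
   Prop-valued predicates. *)

Definition vset (R : realFieldType) (n : nat) := 'rV[R]_n -> Prop.

Definition embH (R : realFieldType) (n : nat) (h : 'rV[int]_n) : 'rV[R]_n :=
  map_mx (fun z : int => z%:~R) h.

Definition vset_eq (R : realFieldType) (n : nat) (A B : vset R n) : Prop :=
  forall v, A v <-> B v.

Definition conv_hull (R : realFieldType) (n : nat) (s : seq 'rV[int]_n)
  : vset R n :=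
  fun v => exists c : 'I_(size s) -> R,
    (forall i, 0 <= c i) /\ \sum_i c i = 1 /\
    v = \sum_i c i *: embH R (nth 0 s i).

Definition integral_polytope (R : realFieldType) (n : nat) (A : vset R n)
  : Prop :=
  exists s : seq 'rV[int]_n, s <> [::] /\ vset_eq A (@conv_hull R n s).

Definition msum (R : realFieldType) (n : nat) (A B : vset R n) : vset R n :=
  fun v => exists a b, A a /\ B b /\ v = a + b.

Definition neg (R : realFieldType) (n : nat) (A : vset R n) : vset R n :=
  fun v => A (- v).

Definition pt (R : realFieldType) (n : nat) (h : 'rV[int]_n) : vset R n :=
  fun v => v = embH R h.

(* Grothendieck group P(H): an element is a formal difference P - Q of
   integral polytopes, represented by the pair (P, Q); two pairs represent
   the same element iff P + Q' + K = P' + Q + K for some integral polytope K. *)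
Definition gpair (R : realFieldType) (n : nat) := (vset R n * vset R n)%type.

Definition is_gpair (R : realFieldType) (n : nat) (x : gpair R n) : Prop :=
  integral_polytope x.1 /\ integral_polytope x.2.

Definition gr_eq (R : realFieldType) (n : nat) (x y : gpair R n) : Prop :=
  exists K, integral_polytope K /\
    vset_eq (msum (msum x.1 y.2) K) (msum (msum y.1 x.2) K).

Definition gadd (R : realFieldType) (n : nat) (x y : gpair R n) : gpair R n :=
  (msum x.1 y.1, msum x.2 y.2).

Definition gopp (R : realFieldType) (n : nat) (x : gpair R n) : gpair R n :=
  (x.2, x.1).

Definition gzero (R : realFieldType) (n : nat) : gpair R n := (@pt R n 0, @pt R n 0).

Definition gstar (R : realFieldType) (n : nat) (x : gpair R n) : gpair R n :=
  (neg x.1, neg x.2).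

Definition id_plus_star (R : realFieldType) (n : nat) (x : gpair R n) :=
  gadd x (gstar x).
Definition id_minus_star (R : realFieldType) (n : nat) (x : gpair R n) :=
  gadd x (gopp (gstar x)).

Definition gpt (R : realFieldType) (n : nat) (h : 'rV[int]_n) : gpair R n :=
  (@pt R n h, @pt R n 0).

(* P_T(H) = coker (H -> P(H)): x and y have the same image iff
   x = y + {h} in P(H) for some h in H (the image of H is {[{h}] | h in H}). *)
Definition gTeq (R : realFieldType) (n : nat) (x y : gpair R n) : Prop :=
  exists h : 'rV[int]_n, gr_eq x (gadd y (@gpt R n h)).

From HB Require Import structures.
From mathcomp Require Import all_boot all_order all_algebra.
From mathcomp Require Import ring lra.
Set Implicit Arguments. Unset Strict Implicit. Unset Printing Implicit Defensive.
Import Order.TTheory GRing.Theory Num.Theory.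
Local Open Scope ring_scope.

(* Send a formal difference P - Q of polytopes to the difference h_P - h_Q of
   their support functions h_P(u) = max_{p in P} <u, p>.  By Farkas' lemma
   (proved here by Fourier-Motzkin elimination) a polytope is determined by its
   support function, so this is injective on P(H); the involution * becomes
   f |-> f(- .), and the image of H becomes the linear functions <., h>.
   Hence both kernels of id + * consist of the odd virtual support functions
   (for P_T(H) because a function that is both even and linear is 0), and both
   images of id - * consist of functions g - g(- .), which are odd.
   Conversely an odd virtual support function f on Z^(n+1) is of the form
   g - g(- .): by induction this holds on the hyperplane u_0 = 0; subtracting
   the lifted solution leaves an odd f' vanishing on that hyperplane, and
   f' = g' - g'(- .) where g' agrees with f' on the half-space u_0 >= 0 and
   vanishes on u_0 <= 0.  Such a g' is again a virtual support function: below
   each vertex adjoin its projection to a hyperplane x_0 = -T deep enough. *)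

Definition row_tail (T : Type) n (p : 'rV[T]_n.+1) : 'rV[T]_n :=
  \row_j p 0 (lift ord0 j).

Definition row_cons (T : Type) n (x : T) (q : 'rV[T]_n) : 'rV[T]_n.+1 :=
  \row_c oapp (fun j => q 0 j) x (unlift ord0 c).

Lemma row_tail_cons (T : Type) n (x : T) (q : 'rV[T]_n) : row_tail (row_cons x q) = q.
Proof. by apply/rowP => j; rewrite !mxE liftK. Qed.

Lemma row_cons_head (T : Type) n (x : T) (q : 'rV[T]_n) : row_cons x q 0 ord0 = x.
Proof. by rewrite !mxE unlift_none. Qed.

Lemma row_tailN (V : zmodType) n (u : 'rV[V]_n.+1) : row_tail (- u) = - row_tail u.
Proof. by apply/rowP => j; rewrite !mxE. Qed.

Lemma row_tailD (V : zmodType) n (u v : 'rV[V]_n.+1) :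
  row_tail (u + v) = row_tail u + row_tail v.
Proof. by apply/rowP => j; rewrite !mxE. Qed.

Lemma row_tailZ (S : pzRingType) n (c : S) (u : 'rV[S]_n.+1) :
  row_tail (c *: u) = c *: row_tail u.
Proof. by apply/rowP => j; rewrite !mxE. Qed.

Lemma row_cons0N (V : zmodType) n (v : 'rV[V]_n) : row_cons 0 (- v) = - row_cons 0 v.
Proof. by apply/rowP => j; rewrite !mxE; case: unlift => /= [k|]; rewrite ?mxE ?oppr0. Qed.

Lemma sum_delta (R : nmodType) (I : finType) (i : I) (F : I -> R) :
  \sum_j (if i == j then F j else 0) = F i.
Proof. by rewrite -big_mkcond (big_pred1 i) // => j; rewrite eq_sym. Qed.

Lemma map_nonnil (T U : eqType) (f : T -> U) (s : seq T) : s != [::] -> map f s != [::].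
Proof. by case: s. Qed.

Section SupportFunctions.
Variable R : realFieldType.

Definition dot n (u v : 'rV[R]_n) : R := \sum_j u 0 j * v 0 j.

Lemma dotC n (u v : 'rV[R]_n) : dot u v = dot v u.
Proof. by apply: eq_bigr => j _; rewrite mulrC. Qed.

Lemma dotDr n (u v w : 'rV[R]_n) : dot u (v + w) = dot u v + dot u w.
Proof. by rewrite /dot -big_split; apply: eq_bigr => j _; rewrite mxE mulrDr. Qed.

Lemma dotNl n (u v : 'rV[R]_n) : dot (- u) v = - dot u v.
Proof. by rewrite /dot -sumrN; apply: eq_bigr => j _; rewrite mxE mulNr. Qed.

Lemma dotDl n (u v w : 'rV[R]_n) : dot (u + v) w = dot u w + dot v w.
Proof. by rewrite dotC dotDr !(dotC w). Qed.

Lemma dotZl n c (u v : 'rV[R]_n) : dot (c *: u) v = c * dot u v.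
Proof. by rewrite /dot mulr_sumr; apply: eq_bigr => j _; rewrite mxE mulrA. Qed.

Lemma dotNr n (u v : 'rV[R]_n) : dot u (- v) = - dot u v.
Proof. by rewrite dotC dotNl dotC. Qed.

Lemma dot_row n (f : 'I_n -> R) (x : 'rV[R]_n) : dot (\row_j f j) x = \sum_j f j * x 0 j.
Proof. by apply: eq_bigr => j _; rewrite mxE. Qed.

Lemma dot_sumr n (I : finType) (c : I -> R) (p : I -> 'rV[R]_n) u :
  dot u (\sum_i c i *: p i) = \sum_i c i * dot u (p i).
Proof.
rewrite /dot; under eq_bigr do rewrite summxE mulr_sumr.
rewrite exchange_big; apply: eq_bigr => i _; rewrite mulr_sumr.
by apply: eq_bigr => j _; rewrite mxE mulrCA.
Qed.

Lemma dot_cons n (u v : 'rV[R]_n.+1) :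
  dot u v = u 0 ord0 * v 0 ord0 + dot (row_tail u) (row_tail v).
Proof. by rewrite /dot big_ord_recl; congr (_ + _); apply: eq_bigr => j _; rewrite !mxE. Qed.

Lemma sandwich (ls us : seq R) : (forall l u, l \in ls -> u \in us -> l <= u) ->
  exists x, (forall l, l \in ls -> l <= x) /\ (forall u, u \in us -> x <= u).
Proof.
elim: ls => [|l ls IH] h.
  elim: us {h} => [|u us [x [_ hx]]]; first by exists 0.
  exists (Num.min u x); split => // w; rewrite inE => /orP [/eqP ->|/hx].
    by rewrite ge_min lexx.
  by move=> hw; rewrite ge_min hw orbT.
have [x [h1 h2]] := IH (fun l' u l'i ui => h l' u (@mem_behead _ (l :: ls) l' l'i) ui).
exists (Num.max l x); split.
  by move=> w; rewrite inE => /orP [/eqP ->|/h1 hw]; rewrite le_max ?lexx // hw orbT.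
by move=> u ui; rewrite ge_max h2 // andbT; apply: h ui; apply: mem_head.
Qed.

Definition lin_consistent k (I : finType) (a : I -> 'rV[R]_k) (b : I -> R) :=
  forall y : I -> R, (forall i, 0 <= y i) -> \sum_i y i *: a i = 0 ->
    0 <= \sum_i y i * b i.

Definition lin_solvable k (I : finType) (a : I -> 'rV[R]_k) (b : I -> R) :=
  exists x, forall i, dot (a i) x <= b i.

Section FourierMotzkinStep.
Variables (k : nat) (I : finType) (a : I -> 'rV[R]_k.+1) (b : I -> R).

(* Eliminating the first variable: a pair (i, j) with [al i > 0 > al j]
   combines inequalities i and j so that the first coefficient cancels, and a
   pair (i, i) with [al i = 0] keeps inequality i. *)
Let al i := a i 0 ord0.
Let lam (p : I * I) :=
  if (0 < al p.1) && (al p.2 < 0) then - al p.2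
  else if (p.1 == p.2) && (al p.1 == 0) then 1 else 0.
Let mu (p : I * I) := if (0 < al p.1) && (al p.2 < 0) then al p.1 else 0.
Let a' p := row_tail (lam p *: a p.1 + mu p *: a p.2).
Let b' p := lam p * b p.1 + mu p * b p.2.

Let lam_ge0 p : 0 <= lam p.
Proof.
rewrite /lam; case: ifP => [/andP [_ h]|_]; first by rewrite oppr_ge0 ltW.
by case: ifP.
Qed.

Let mu_ge0 p : 0 <= mu p.
Proof. by rewrite /mu; case: ifP => // /andP [h _]; rewrite ltW. Qed.

Let lam_mu_head p : lam p * al p.1 + mu p * al p.2 = 0.
Proof.
rewrite /lam /mu; case: ifP => [_|_]; first ring.
by case: ifP => [/andP [_ /eqP ->]|_]; ring.
Qed.

Let sum_pairs (y' : I * I -> R) (F : I -> R) :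
  \sum_i (\sum_p y' p * (lam p * (p.1 == i)%:R + mu p * (p.2 == i)%:R)) * F i =
  \sum_p y' p * (lam p * F p.1 + mu p * F p.2).
Proof.
under eq_bigr do rewrite mulr_suml.
rewrite exchange_big /=; apply: eq_bigr => p _.
rewrite -(sum_delta p.1 F) -(sum_delta p.2 F) !mulr_sumr -big_split mulr_sumr.
apply: eq_bigr => i _; rewrite !(eq_sym _ i).
by case: eqP; case: eqP => _ _ /=; ring.
Qed.

Lemma lin_consistent_elim : lin_consistent a b -> lin_consistent a' b'.
Proof.
move=> hy y' y'0 hsum.
pose y i := \sum_p y' p * (lam p * (p.1 == i)%:R + mu p * (p.2 == i)%:R).
have y0 i : 0 <= y i.
  by apply: sumr_ge0 => p _; apply: mulr_ge0 => //; apply: addr_ge0; apply: mulr_ge0.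
rewrite -(sum_pairs y' b); apply: hy => //.
apply/rowP => c; rewrite summxE mxE.
under eq_bigr do rewrite mxE.
rewrite (sum_pairs y' (fun i => a i 0 c)).
case: (unliftP ord0 c) => [c' ->|->]; last by apply: big1 => p _; rewrite lam_mu_head mulr0.
transitivity ((\sum_p y' p *: a' p) 0 c'); last by rewrite hsum mxE.
by rewrite summxE; apply: eq_bigr => p _; rewrite !mxE.
Qed.

Lemma lin_solvable_lift x' : (forall p, dot (a' p) x' <= b' p) ->
  exists x0, forall i, dot (a i) (row_cons x0 x') <= b i.
Proof.
move=> hx'.
pose r i := b i - dot (row_tail (a i)) x'.
have hr p : 0 <= lam p * r p.1 + mu p * r p.2.
  by have := hx' p; rewrite /a' /b' /r row_tailD !row_tailZ dotDl !dotZl; lra.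
have r_div i : al i != 0 -> r i = r i / al i * al i by move=> ai; rewrite divfK.
pose ls := [seq r j / al j | j <- enum I & al j < 0].
pose us := [seq r j / al j | j <- enum I & 0 < al j].
have [x0 [hl hu]] : exists x, (forall l, l \in ls -> l <= x) /\ (forall u, u \in us -> x <= u).
  apply: sandwich => l u /mapP [j]; rewrite mem_filter => /andP [hj _] ->.
  move=> /mapP [i]; rewrite mem_filter => /andP [hi _] ->.
  have h := hr (i, j); rewrite /lam /mu /= hi hj /= in h.
  rewrite [r i](r_div i (lt0r_neq0 hi)) [r j](r_div j (ltr0_neq0 hj)) in h.
  set qi := r i / al i in h *; set qj := r j / al j in h *.
  have hp : 0 < al i * - al j by apply: mulr_gt0; lra.
  by rewrite -subr_ge0 -(pmulr_rge0 _ hp); lra.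
exists x0 => i; rewrite dot_cons row_cons_head row_tail_cons -/(al i).
rewrite -lerBrDr -/(r i).
have [hi|hi|hi] := ltgtP (al i) 0.
- have := hl (r i / al i) ltac:(by apply: map_f; rewrite mem_filter hi mem_enum).
  by set q := r i / al i; rewrite [r i](r_div i (ltr0_neq0 hi)) -/q; nra.
- have := hu (r i / al i) ltac:(by apply: map_f; rewrite mem_filter hi mem_enum).
  by set q := r i / al i; rewrite [r i](r_div i (lt0r_neq0 hi)) -/q; nra.
- by have := hr (i, i); rewrite /lam /mu /= hi ltxx !eqxx /= mul0r; lra.
Qed.

End FourierMotzkinStep.

Lemma fourier_motzkin k (I : finType) (a : I -> 'rV[R]_k) (b : I -> R) :
  lin_consistent a b -> lin_solvable a b.
Proof.
elim: k I a b => [|k IH] I a b hy.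
  exists 0 => i; rewrite /dot big_ord0.
  have := hy (fun j => (i == j)%:R) (fun j => ler0n _ _) ltac:(by apply/rowP => - []).
  by under eq_bigr do rewrite mulr_natl mulrb; rewrite sum_delta.
have [x' hx'] := IH _ _ _ (lin_consistent_elim hy).
have [x0 hx0] := lin_solvable_lift hx'.
by exists (row_cons x0 x').
Qed.

Lemma fourier_motzkin_eq k (I J : finType) (a : I -> 'rV[R]_k) (b : I -> R)
    (e : J -> 'rV[R]_k) (f : J -> R) :
  (forall (y : I -> R) (z : J -> R), (forall i, 0 <= y i) ->
     \sum_i y i *: a i + \sum_j z j *: e j = 0 ->
     0 <= \sum_i y i * b i + \sum_j z j * f j) ->
  exists x, (forall i, dot (a i) x <= b i) /\ (forall j, dot (e j) x = f j).
Proof.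
move=> hyz.
pose a2 (r : I + (J + J)) :=
  match r with inl i => a i | inr (inl j) => e j | inr (inr j) => - e j end.
pose b2 (r : I + (J + J)) :=
  match r with inl i => b i | inr (inl j) => f j | inr (inr j) => - f j end.
have [x hx] : lin_solvable a2 b2.
  apply: fourier_motzkin => y y0; rewrite !big_sumType /=.
  pose z j := y (inr (inl j)) - y (inr (inr j)).
  have -> : \sum_j y (inr (inl j)) *: e j + \sum_j y (inr (inr j)) *: - e j =
            \sum_j z j *: e j.
    by rewrite -big_split; apply: eq_bigr => j _; rewrite scalerN scalerBl.
  have -> : \sum_j y (inr (inl j)) * f j + \sum_j y (inr (inr j)) * - f j =
            \sum_j z j * f j.
    by rewrite -big_split; apply: eq_bigr => j _; rewrite mulrN mulrBl.
  exact: hyz.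
exists x; split => [i|j]; first exact: hx (inl i).
apply/le_anti; rewrite (hx (inr (inl j))) /= -lerN2 -dotNl.
exact: hx (inr (inr j)).
Qed.

Lemma dot_delta n (i : 'I_n) (x : 'rV[R]_n) : dot (delta_mx 0 i) x = x 0 i.
Proof.
rewrite /dot -[RHS](sum_delta i (fun j => x 0 j)); apply: eq_bigr => j _.
by rewrite mxE eqxx /= eq_sym; case: eqP; rewrite ?mul1r ?mul0r.
Qed.

(* Farkas' lemma.  The points are homogenised to [(1, p i)] so that
   [\sum_i c i = 1] becomes one more linear equation. *)
Lemma conv_comb_of_unseparated m n (p : 'I_m -> 'rV[R]_n) v :
  (forall u, exists i, dot u v <= dot u (p i)) ->
  exists c : 'rV[R]_m, [/\ forall i, 0 <= c 0 i, \sum_i c 0 i = 1 &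
                         v = \sum_i c 0 i *: p i].
Proof.
move=> unsep; pose ph i := row_cons 1 (p i).
have [c [c_ge0 c_eq]] : exists c : 'rV[R]_m,
    (forall i, dot (- delta_mx 0 i) c <= 0) /\
    (forall j, dot (\row_i ph i 0 j) c = row_cons 1 v 0 j).
  apply: fourier_motzkin_eq => y z y_ge0 /rowP hsum.
  rewrite big1 ?add0r => [|i _]; last by rewrite mulr0.
  pose zr := \row_j z j.
  have y_dot i : y i = dot zr (ph i).
    have := hsum i; rewrite !mxE !summxE.
    under eq_bigr do rewrite !mxE eqxx /= mulrN mulr_natr mulrb.
    under [X in _ + X]eq_bigr do rewrite 2!mxE.
    rewrite sumrN sum_delta => /eqP; rewrite addrC subr_eq0 => /eqP <-.
    by rewrite /zr dot_row.
  have [i hi] := unsep (- row_tail zr); rewrite !dotNl lerN2 in hi.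
  have -> : \sum_j z j * row_cons 1 v 0 j = dot zr (row_cons 1 v) by rewrite /zr dot_row.
  rewrite dot_cons row_tail_cons; apply: le_trans (y_ge0 i) _.
  by rewrite y_dot dot_cons row_tail_cons /ph !row_cons_head lerD2l.
have comb : \sum_i c 0 i *: ph i = row_cons 1 v.
  apply/rowP => j; rewrite -c_eq dot_row summxE.
  by apply: eq_bigr => i _; rewrite !mxE mulrC.
exists c; split.
- by move=> i; have := c_ge0 i; rewrite dotNl dot_delta oppr_le0.
- have := congr1 (fun w : 'rV[R]_n.+1 => w 0 ord0) comb.
  rewrite /= row_cons_head summxE => <-.
  by apply: eq_bigr => i _; rewrite mxE row_cons_head mulr1.
- apply/rowP => j; have := congr1 (fun w : 'rV[R]_n.+1 => w 0 (lift ord0 j)) comb.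
  rewrite /= summxE !mxE liftK /= => <-.
  by rewrite summxE; apply: eq_bigr => i _; rewrite !mxE liftK.
Qed.

Definition conv n (I : finType) (p : I -> 'rV[R]_n) : vset R n :=
  fun v => exists c : I -> R,
    (forall i, 0 <= c i) /\ \sum_i c i = 1 /\ v = \sum_i c i *: p i.

Lemma conv_of_unseparated n (I : finType) (p : I -> 'rV[R]_n) v :
  (forall u, exists i, dot u v <= dot u (p i)) -> conv p v.
Proof.
move=> unsep.
have [c [c_ge0 c1 ->]] : exists c : 'rV[R]_#|I|, [/\ forall k, 0 <= c 0 k,
    \sum_k c 0 k = 1 & v = \sum_k c 0 k *: p (enum_val k)].
  apply: conv_comb_of_unseparated => u.
  by have [i hi] := unsep u; exists (enum_rank i); rewrite /= enum_rankK.
have by_rank (V : nmodType) (F : 'I_#|I| -> V) : \sum_k F k = \sum_i F (enum_rank i).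
  by rewrite (reindex (@enum_rank I)) //; apply: onW_bij; exact: enum_rank_bij.
exists (fun i => c 0 (enum_rank i)); split => //; split; first by rewrite -c1 by_rank.
by rewrite by_rank; under eq_bigr do rewrite /= enum_rankK.
Qed.

Lemma conv_point n (I : finType) (p : I -> 'rV[R]_n) i : conv p (p i).
Proof.
exists (fun j => (i == j)%:R); split; first by move=> j; apply: ler0n.
split; first by rewrite -[RHS](sum_delta i (fun _ => 1)); apply: eq_bigr => j _; case: eqP.
by rewrite -[LHS](sum_delta i p); apply: eq_bigr => j _; case: eqP; rewrite ?scale1r ?scale0r.
Qed.

Lemma conv_dot_le n (I : finType) (p : I -> 'rV[R]_n) u m v :
  conv p v -> (forall i, dot u (p i) <= m) -> dot u v <= m.
Proof.
move=> [c [c_ge0 [c1 ->]]] hm; rewrite dot_sumr.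
apply: le_trans (_ : \sum_i c i * m <= m); first by apply: ler_sum => i _; apply: ler_wpM2l.
by rewrite -mulr_suml c1 mul1r.
Qed.

Definition polytope n (A : vset R n) :=
  exists (I : finType) (i0 : I) (p : I -> 'rV[R]_n), vset_eq A (conv p).

Definition support_at n (A : vset R n) (u : 'rV[R]_n) (m : R) :=
  (forall v, A v -> dot u v <= m) /\ exists2 v, A v & dot u v = m.

Lemma support_at_uniq n (A : vset R n) u m1 m2 :
  support_at A u m1 -> support_at A u m2 -> m1 = m2.
Proof.
move=> [le1 [v1 A1 e1]] [le2 [v2 A2 e2]].
by apply/le_anti/andP; split; [rewrite -e1; apply: le2 | rewrite -e2; apply: le1].
Qed.

Lemma support_at_eq n (A B : vset R n) u m :
  vset_eq A B -> support_at A u m -> support_at B u m.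
Proof. by move=> AB [le [v /AB Bv vm]]; split=> [w /AB|]; [exact: le | exists v]. Qed.

Lemma polytope_mem n (A : vset R n) v : polytope A ->
  (forall u, exists2 w, A w & dot u v <= dot u w) -> A v.
Proof.
move=> [I [i0 [p AE]]] below; apply/AE; apply: conv_of_unseparated => u.
have [i _ imax] := @arg_maxP _ _ I i0 predT (fun i => dot u (p i)) isT.
have [w /AE Aw vw] := below u; exists i; apply: le_trans vw _.
by apply: conv_dot_le Aw _ => j; apply: imax.
Qed.

Definition polytope_supp n (A : vset R n) (h : 'rV[R]_n -> R) :=
  polytope A /\ forall u, support_at A u (h u).

Lemma polytope_supp_eq n (A B : vset R n) h :
  polytope_supp A h -> polytope_supp B h -> vset_eq A B.
Proof.
have sub (X Y : vset R n) : polytope_supp X h -> polytope_supp Y h -> forall v, X v -> Y v.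
  move=> [_ hX] [pY hY] v Xv; apply: polytope_mem => // u.
  have [hXle _] := hX u; have [_ [w Yw wh]] := hY u.
  by exists w => //; rewrite wh; apply: hXle.
by move=> hA hB v; split; apply: sub.
Qed.

Lemma support_at_msum n (A B : vset R n) u m1 m2 :
  support_at A u m1 -> support_at B u m2 -> support_at (msum A B) u (m1 + m2).
Proof.
move=> [leA [a Aa am]] [leB [b Bb bm]]; split.
  by move=> _ [x [y [Ax [By ->]]]]; rewrite dotDr lerD ?leA ?leB.
by exists (a + b); [exists a, b | rewrite dotDr am bm].
Qed.

Lemma support_at_neg n (A : vset R n) u m : support_at A (- u) m -> support_at (neg A) u m.
Proof.
move=> [leA [a Aa am]]; split=> [v /leA|]; first by rewrite dotNl dotNr opprK.
by exists (- a); rewrite /neg ?opprK // dotNr -dotNl.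
Qed.

Lemma polytope_neg n (A : vset R n) : polytope A -> polytope (neg A).
Proof.
move=> [I [i0 [p AE]]]; exists I, i0, (fun i => - p i) => v.
have sumN (c : I -> R) : \sum_i c i *: - p i = - \sum_i c i *: p i.
  by rewrite -sumrN; apply: eq_bigr => i _; rewrite scalerN.
rewrite /neg AE; split=> [] [c [c_ge0 [c1 cv]]]; exists c; do 2 split => //.
  by rewrite sumN -cv opprK.
by rewrite cv sumN opprK.
Qed.

Lemma polytope_msum n (A B : vset R n) : polytope A -> polytope B -> polytope (msum A B).
Proof.
move=> [I [i0 [p AE]]] [J [j0 [q BE]]].
exists (I * J)%type, (i0, j0), (fun k => p k.1 + q k.2) => v; split.
  move=> [a [b [/AE Aa [/BE Bb ->]]]]; apply: conv_of_unseparated => u.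
  have [i _ imax] := @arg_maxP _ _ I i0 predT (fun i => dot u (p i)) isT.
  have [j _ jmax] := @arg_maxP _ _ J j0 predT (fun j => dot u (q j)) isT.
  exists (i, j); rewrite !dotDr lerD //.
    by apply: conv_dot_le Aa _ => i'; apply: imax.
  by apply: conv_dot_le Bb _ => j'; apply: jmax.
move=> [l [l_ge0 [l1 ->]]].
exists (\sum_i (\sum_j l (i, j)) *: p i), (\sum_j (\sum_i l (i, j)) *: q j); split.
  apply/AE; exists (fun i => \sum_j l (i, j)); split; first by move=> i; apply: sumr_ge0.
  by split => //; rewrite pair_bigA -l1; apply: eq_bigr => -[].
split.
  apply/BE; exists (fun j => \sum_i l (i, j)); split; first by move=> j; apply: sumr_ge0.
  by split => //; rewrite exchange_big pair_bigA -l1; apply: eq_bigr => -[].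
under eq_bigr do rewrite scalerDr.
rewrite big_split /=; congr (_ + _); under [RHS]eq_bigr do rewrite scaler_suml.
  by rewrite pair_bigA; apply: eq_bigr => -[].
by rewrite exchange_big pair_bigA; apply: eq_bigr => -[].
Qed.

Lemma polytope_supp_msum n (A B : vset R n) f g :
  polytope_supp A f -> polytope_supp B g ->
  polytope_supp (msum A B) (fun u => f u + g u).
Proof.
move=> [pA sA] [pB sB]; split; first exact: polytope_msum.
by move=> u; apply: support_at_msum.
Qed.

Lemma polytope_supp_neg n (A : vset R n) f :
  polytope_supp A f -> polytope_supp (neg A) (fun u => f (- u)).
Proof.
move=> [pA sA]; split; first exact: polytope_neg.
by move=> u; apply: support_at_neg.
Qed.

Lemma polytope_supp_transfer n (A B : vset R n) h :
  vset_eq A B -> polytope_supp A h -> polytope_supp B h.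
Proof.
move=> AB [[I [i0 [p AE]]] sA]; split; last by move=> u; apply: support_at_eq (sA u).
by exists I, i0, p => v; rewrite -AB.
Qed.

Lemma polytope_supp_ext n (A : vset R n) f g :
  polytope_supp A f -> (forall u, f u = g u) -> polytope_supp A g.
Proof. by move=> [pA sA] fg; split=> // u; rewrite -fg. Qed.

Definition dotz n (u : 'rV[R]_n) (p : 'rV[int]_n) : R := dot u (embH R p).

Lemma dotzD n (u : 'rV[R]_n) p q : dotz u (p + q) = dotz u p + dotz u q.
Proof. by rewrite /dotz -dotDr; congr dot; apply/rowP => j; rewrite !mxE intrD. Qed.

Lemma dotzN n (u : 'rV[R]_n) p : dotz u (- p) = - dotz u p.
Proof. by rewrite /dotz -dotNr; congr dot; apply/rowP => j; rewrite !mxE intrN. Qed.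

Lemma dotNz n (u : 'rV[R]_n) p : dotz (- u) p = - dotz u p.
Proof. exact: dotNl. Qed.

Lemma dotz0 n (u : 'rV[R]_n) : dotz u 0 = 0.
Proof. by rewrite /dotz /dot big1 // => j _; rewrite !mxE mulr0. Qed.

Lemma dotz_cons n (u : 'rV[R]_n.+1) p :
  dotz u p = u 0 ord0 * (p 0 ord0)%:~R + dotz (row_tail u) (row_tail p).
Proof. by rewrite /dotz dot_cons mxE; congr (_ + dot _ _); apply/rowP => j; rewrite !mxE. Qed.

Lemma polytope_supp_pt n (h : 'rV[int]_n) : polytope_supp (@pt R n h) (fun u => dotz u h).
Proof.
split=> [|u]; last by split=> [v ->|]; last by exists (embH R h).
exists unit, tt, (fun _ => embH R h) => v; split=> [->|[c [_ [c1 ->]]]].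
  exists (fun _ => 1); split=> [_|]; first exact: ler01.
  by rewrite !big_const card_unit /= !addr0 scale1r.
by rewrite /pt -scaler_suml c1 scale1r.
Qed.

Definition hsupp n (s : seq 'rV[int]_n) (u : 'rV[R]_n) : R :=
  foldr (fun p m => Num.max (dotz u p) m) (dotz u (head 0 s)) s.

Lemma hsupp_ub n (s : seq 'rV[int]_n) u p : p \in s -> dotz u p <= hsupp s u.
Proof.
rewrite /hsupp; move: (dotz u (head 0 s)) => x.
by elim: s => //= a s IH; rewrite inE le_max => /orP [/eqP ->|/IH ->]; rewrite ?lexx ?orbT.
Qed.

Lemma hsupp_attained n (s : seq 'rV[int]_n) u :
  s != [::] -> exists2 p, p \in s & hsupp s u = dotz u p.
Proof.
rewrite /hsupp; set f := fun p m => Num.max (dotz u p) m.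
have gen x t : foldr f x t = x \/ exists2 p, p \in t & foldr f x t = dotz u p.
  elim: t => [|b t IH] /=; first by left.
  have [le_bt|lt_tb] := leP (dotz u b) (foldr f x t); last first.
    by right; exists b; rewrite ?mem_head // /f max_l ?ltW.
  rewrite /f max_r //; case: IH => [->|[p pt ->]]; first by left.
  by right; exists p; rewrite // inE pt orbT.
case: s => // a s _; case: (gen (dotz u a) (a :: s)) => [->|//].
by exists a; rewrite ?mem_head.
Qed.

Lemma hsupp_char n (s : seq 'rV[int]_n) u m : s != [::] ->
  (forall p, p \in s -> dotz u p <= m) -> (exists2 p, p \in s & dotz u p = m) ->
  hsupp s u = m.
Proof.
move=> s_ne ub [p ps pm]; apply/le_anti; apply/andP; split; last by rewrite -pm hsupp_ub.
by have [q qs ->] := hsupp_attained u s_ne; apply: ub.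
Qed.

Lemma hsupp_map n k (s : seq 'rV[int]_n) (f : 'rV[int]_n -> 'rV[int]_k) u v :
  s != [::] -> (forall p, dotz u (f p) = dotz v p) -> hsupp (map f s) u = hsupp s v.
Proof.
move=> s_ne fE; apply: hsupp_char; first exact: map_nonnil.
  by move=> _ /mapP [p ps ->]; rewrite fE hsupp_ub.
by have [p ps ->] := hsupp_attained v s_ne; exists (f p); [exact: map_f | exact: fE].
Qed.

Lemma hsupp_neg n (s : seq 'rV[int]_n) u : s != [::] -> hsupp (map -%R s) u = hsupp s (- u).
Proof. by move=> s_ne; apply: hsupp_map => // p; rewrite dotzN dotNz. Qed.

Definition msum_seq n (s t : seq 'rV[int]_n) := [seq p + q | p <- s, q <- t].

Lemma msum_seq_nonnil n (s t : seq 'rV[int]_n) :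
  s != [::] -> t != [::] -> msum_seq s t != [::].
Proof. by case: s => // a s; case: t. Qed.

Lemma hsupp_msum n (s t : seq 'rV[int]_n) u : s != [::] -> t != [::] ->
  hsupp (msum_seq s t) u = hsupp s u + hsupp t u.
Proof.
move=> s_ne t_ne; apply: hsupp_char; first exact: msum_seq_nonnil.
  by move=> _ /allpairsP [[p q] /= [ps qt ->]]; rewrite dotzD lerD ?hsupp_ub.
have [p ps ->] := hsupp_attained u s_ne; have [q qt ->] := hsupp_attained u t_ne.
by exists (p + q); [exact: allpairs_f | rewrite dotzD].
Qed.

Lemma polytope_supp_hull n (s : seq 'rV[int]_n) :
  s != [::] -> polytope_supp (@conv_hull R n s) (hsupp s).
Proof.
move=> s_ne; have s_gt0 : (0 < size s)%N by case: s s_ne.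
pose p (i : 'I_(size s)) := embH R (nth 0 s i).
split=> [|u]; first by exists 'I_(size s), (Ordinal s_gt0), p.
split=> [v vs|].
  by apply: (@conv_dot_le _ _ p) vs _ => i; rewrite hsupp_ub ?mem_nth.
have [q qs ->] := hsupp_attained u s_ne; exists (embH R q) => //.
by have := @conv_point _ _ p (Ordinal (etrans (index_mem q s) qs)); rewrite /p /= nth_index.
Qed.

Lemma integral_polytope_pt n (h : 'rV[int]_n) : integral_polytope (@pt R n h).
Proof.
exists [:: h]; split=> //; apply: polytope_supp_eq (polytope_supp_pt h) _.
apply: polytope_supp_ext (polytope_supp_hull _) _ => // u.
by rewrite /hsupp /= maxxx.
Qed.

Lemma integral_polytope_supp n (A : vset R n) : integral_polytope A ->
  exists2 s, s != [::] & polytope_supp A (hsupp s).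
Proof.
move=> [s [s_ne AE]]; have s_ne' : s != [::] by apply/eqP.
exists s => //; apply: polytope_supp_transfer (polytope_supp_hull s_ne').
by move=> v; rewrite AE.
Qed.

Definition virtual_supp n (f : 'rV[R]_n -> R) :=
  exists a b, [/\ a != [::], b != [::] & forall u, f u = hsupp a u - hsupp b u].

Lemma virtual_supp0 n : virtual_supp (fun _ : 'rV[R]_n => 0).
Proof. by exists [:: 0], [:: 0]; split=> // u; rewrite subrr. Qed.

Lemma virtual_suppD n (f g : 'rV[R]_n -> R) :
  virtual_supp f -> virtual_supp g -> virtual_supp (fun u => f u + g u).
Proof.
move=> [a [b [a_ne b_ne fE]]] [c [d [c_ne d_ne gE]]].
exists (msum_seq a c), (msum_seq b d); split; try exact: msum_seq_nonnil.
by move=> u; rewrite !hsupp_msum // fE gE; ring.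
Qed.

Lemma virtual_suppN n (f : 'rV[R]_n -> R) :
  virtual_supp f -> virtual_supp (fun u => - f u).
Proof. by move=> [a [b [a_ne b_ne fE]]]; exists b, a; split=> // u; rewrite fE opprB. Qed.

Lemma virtual_suppB n (f g : 'rV[R]_n -> R) :
  virtual_supp f -> virtual_supp g -> virtual_supp (fun u => f u - g u).
Proof. by move=> vf /virtual_suppN; apply: virtual_suppD. Qed.

Lemma virtual_supp_opp n (f : 'rV[R]_n -> R) :
  virtual_supp f -> virtual_supp (fun u => f (- u)).
Proof.
move=> [a [b [a_ne b_ne fE]]]; exists (map -%R a), (map -%R b).
by split=> [||u]; rewrite ?map_nonnil ?hsupp_neg ?fE.
Qed.

Lemma virtual_supp_tail n (f : 'rV[R]_n -> R) :
  virtual_supp f -> virtual_supp (fun u : 'rV[R]_n.+1 => f (row_tail u)).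
Proof.
move=> [a [b [a_ne b_ne fE]]]; exists (map (row_cons 0) a), (map (row_cons 0) b).
split=> [||u]; rewrite ?map_nonnil // fE; congr (_ - _); symmetry; apply: hsupp_map => // p;
  by rewrite dotz_cons row_cons_head row_tail_cons mulr0 add0r.
Qed.

Lemma virtual_supp_cons0 n (f : 'rV[R]_n.+1 -> R) :
  virtual_supp f -> virtual_supp (fun v => f (row_cons 0 v)).
Proof.
move=> [a [b [a_ne b_ne fE]]]; exists (map (@row_tail _ n) a), (map (@row_tail _ n) b).
split=> [||u]; rewrite ?map_nonnil // fE; congr (_ - _); symmetry; apply: hsupp_map => // p;
  by rewrite [RHS]dotz_cons row_cons_head row_tail_cons mul0r add0r.
Qed.

Definition lower_copy n (T : int) (s : seq 'rV[int]_n.+1) :=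
  s ++ [seq row_cons (- T) (row_tail p) | p <- s].

Section LowerCopy.
Variables (n : nat) (T : int) (s : seq 'rV[int]_n.+1).
Hypotheses (s_ne : s != [::]) (s_ge : forall p, p \in s -> - T <= p 0 ord0).

Lemma lower_copy_nonnil : lower_copy T s != [::].
Proof. by rewrite /lower_copy; case: s s_ne. Qed.

Lemma hsupp_lower_copy_ge0 (u : 'rV[R]_n.+1) :
  0 <= u 0 ord0 -> hsupp (lower_copy T s) u = hsupp s u.
Proof.
move=> u_ge0; apply: hsupp_char; first exact: lower_copy_nonnil.
  move=> q; rewrite mem_cat => /orP [qs|/mapP [p ps ->]]; first exact: hsupp_ub.
  apply: le_trans (hsupp_ub u ps); rewrite [X in _ <= X]dotz_cons dotz_cons.
  by rewrite row_cons_head row_tail_cons lerD2r ler_wpM2l // ler_int s_ge.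
by have [p ps ->] := hsupp_attained u s_ne; exists p; rewrite // mem_cat ps.
Qed.

Lemma hsupp_lower_copy_le0 (u : 'rV[R]_n.+1) : u 0 ord0 <= 0 ->
  hsupp (lower_copy T s) u = hsupp s (row_cons 0 (row_tail u)) + u 0 ord0 * (- T)%:~R.
Proof.
have tailE p : dotz (row_cons 0 (row_tail u)) p = dotz (row_tail u) (row_tail p).
  by rewrite dotz_cons row_cons_head row_tail_cons mul0r add0r.
move=> u_le0; apply: hsupp_char; first exact: lower_copy_nonnil.
  move=> q; rewrite mem_cat => /orP [qs|/mapP [p ps ->]].
    rewrite dotz_cons addrC lerD ?ler_wnM2l ?ler_int ?s_ge //.
    by rewrite -tailE hsupp_ub.
  by rewrite dotz_cons row_cons_head row_tail_cons addrC lerD2r -tailE hsupp_ub.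
have [p ps ->] := hsupp_attained (row_cons 0 (row_tail u)) s_ne.
exists (row_cons (- T) (row_tail p)); first by rewrite mem_cat; apply/orP; right; apply: map_f.
by rewrite dotz_cons row_cons_head row_tail_cons tailE addrC.
Qed.

End LowerCopy.

Lemma row_head_lower_bound n (l : seq 'rV[int]_n.+1) :
  exists T : int, forall p, p \in l -> - T <= p 0 ord0.
Proof.
exists (\sum_(q <- l) `|q 0 ord0|); elim: l => // a l IH p.
rewrite inE big_cons => /orP [/eqP ->|/IH]; last by apply: le_trans; rewrite lerN2 lerDr.
apply: le_trans (_ : - `|a 0 ord0| <= _); last by rewrite lerNl -normrN ler_norm.
by rewrite lerN2 lerDl sumr_ge0.
Qed.

(* Both lists get lower copies at the same depth [T], so the terms linear in
   [u_0] from [hsupp_lower_copy_le0] cancel. *)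
Lemma virtual_supp_cut n (f : 'rV[R]_n.+1 -> R) : virtual_supp f ->
  exists g : 'rV[R]_n.+1 -> R,
    [/\ virtual_supp g, forall u : 'rV[R]_n.+1, 0 <= u 0 ord0 -> g u = f u
      & forall u : 'rV[R]_n.+1, u 0 ord0 <= 0 -> g u = f (row_cons 0 (row_tail u))].
Proof.
move=> [a [b [a_ne b_ne fE]]]; have [T Tle] := row_head_lower_bound (a ++ b).
have a_ge p : p \in a -> - T <= p 0 ord0 by move=> pa; rewrite Tle // mem_cat pa.
have b_ge p : p \in b -> - T <= p 0 ord0 by move=> pb; rewrite Tle // mem_cat pb orbT.
exists (fun u => hsupp (lower_copy T a) u - hsupp (lower_copy T b) u); split.
- by exists (lower_copy T a), (lower_copy T b); split; rewrite ?lower_copy_nonnil.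
- by move=> u u_ge0; rewrite !hsupp_lower_copy_ge0 // fE.
- by move=> u u_le0; rewrite !hsupp_lower_copy_le0 // fE; ring.
Qed.

Definition odd_fun n (f : 'rV[R]_n -> R) := forall u, f (- u) = - f u.

Lemma odd_virtual_supp_split n (f : 'rV[R]_n -> R) : virtual_supp f -> odd_fun f ->
  exists2 g, virtual_supp g & forall u, f u = g u - g (- u).
Proof.
elim: n f => [|n IH] f vf f_odd.
  exists (fun _ => 0); first exact: virtual_supp0.
  move=> u; have uN : - u = u by apply/rowP => -[].
  by have := f_odd u; rewrite uN; lra.
have [g0 vg0 g0E] : exists2 g0, virtual_supp g0 &
    forall v, f (row_cons 0 v) = g0 v - g0 (- v).
  by apply: IH (virtual_supp_cons0 vf) _ => v; rewrite row_cons0N f_odd.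
pose f1 u := f u - (g0 (row_tail u) - g0 (- row_tail u)).
have vf1 : virtual_supp f1.
  apply: virtual_suppB vf (virtual_suppB (virtual_supp_tail vg0) _).
  exact: virtual_supp_tail (virtual_supp_opp vg0).
have f1_odd u : f1 (- u) = - f1 u by rewrite /f1 row_tailN opprK f_odd; ring.
have f1_hyp v : f1 (row_cons 0 v) = 0 by rewrite /f1 row_tail_cons -g0E subrr.
have [g1 [vg1 g1_ge0 g1_le0]] := virtual_supp_cut vf1.
exists (fun u => g1 u + g0 (row_tail u)); first exact: virtual_suppD vg1 (virtual_supp_tail vg0).
have f1E u : f1 u = g1 u - g1 (- u).
  have [u_ge0|u_lt0] := leP 0 (u 0 ord0).
    by rewrite g1_ge0 // g1_le0 ?mxE ?oppr_le0 // f1_hyp subr0.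
  by rewrite g1_le0 ?ltW // g1_ge0 ?mxE ?oppr_ge0 ?ltW // f1_hyp f1_odd sub0r opprK.
by move=> u; have := f1E u; rewrite /f1 row_tailN; lra.
Qed.

Definition gpair_supp n (x : gpair R n) (f : 'rV[R]_n -> R) :=
  exists f1 f2, [/\ polytope_supp x.1 f1, polytope_supp x.2 f2
                  & forall u, f u = f1 u - f2 u].

Lemma gpair_supp_gadd n (x y : gpair R n) f g : gpair_supp x f -> gpair_supp y g ->
  gpair_supp (gadd x y) (fun u => f u + g u).
Proof.
move=> [f1 [f2 [s1 s2 fE]]] [g1 [g2 [t1 t2 gE]]].
exists (fun u => f1 u + g1 u), (fun u => f2 u + g2 u).
by split=> [||u]; rewrite ?fE ?gE; [exact: polytope_supp_msum | exact: polytope_supp_msum | ring].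
Qed.

Lemma gpair_supp_gopp n (x : gpair R n) f :
  gpair_supp x f -> gpair_supp (gopp x) (fun u => - f u).
Proof. by move=> [f1 [f2 [s1 s2 fE]]]; exists f2, f1; split=> // u; rewrite fE opprB. Qed.

Lemma gpair_supp_gstar n (x : gpair R n) f :
  gpair_supp x f -> gpair_supp (gstar x) (fun u => f (- u)).
Proof.
move=> [f1 [f2 [s1 s2 fE]]]; exists (fun u => f1 (- u)), (fun u => f2 (- u)).
by split=> //; exact: polytope_supp_neg.
Qed.

Lemma gpair_supp_gpt n (h : 'rV[int]_n) : gpair_supp (@gpt R n h) (fun u => dotz u h).
Proof.
exists (fun u => dotz u h), (fun u => dotz u 0).
by split=> [||u]; rewrite ?dotz0 ?subr0 //; exact: polytope_supp_pt.
Qed.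

Lemma gr_eq_supp n (x y : gpair R n) f g : gpair_supp x f -> gpair_supp y g ->
  gr_eq x y <-> forall u, f u = g u.
Proof.
move=> [f1 [f2 [s1 s2 fE]]] [g1 [g2 [t1 t2 gE]]].
have sum3 (A B C : vset R n) a b c : polytope_supp A a -> polytope_supp B b ->
    polytope_supp C c -> polytope_supp (msum (msum A B) C) (fun u => a u + b u + c u).
  by move=> sA sB sC; do 2 apply: polytope_supp_msum => //.
split=> [[K [/integral_polytope_supp [k _ sK] KE]] u|fg].
  have [_ sL] := sum3 _ _ _ _ _ _ s1 t2 sK; have [_ sR] := sum3 _ _ _ _ _ _ t1 s2 sK.
  have := support_at_uniq (support_at_eq KE (sL u)) (sR u).
  by rewrite fE gE; lra.
exists (@pt R n 0); split; first exact: integral_polytope_pt.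
apply: polytope_supp_eq (sum3 _ _ _ _ _ _ s1 t2 (polytope_supp_pt 0)) _.
apply: polytope_supp_ext (sum3 _ _ _ _ _ _ t1 s2 (polytope_supp_pt 0)) _ => u.
by have := fg u; rewrite fE gE; lra.
Qed.

Lemma gTeq_supp n (x y : gpair R n) f g : gpair_supp x f -> gpair_supp y g ->
  gTeq x y <-> exists h, forall u, f u = g u + dotz u h.
Proof.
move=> xf yg; split=> [] [h xyh]; exists h;
  by apply/(gr_eq_supp xf (gpair_supp_gadd yg (gpair_supp_gpt h))).
Qed.

Lemma is_gpair_supp n (x : gpair R n) : is_gpair x ->
  exists2 f, virtual_supp f & gpair_supp x f.
Proof.
move=> [/integral_polytope_supp [a a_ne sa] /integral_polytope_supp [b b_ne sb]].
by exists (fun u => hsupp a u - hsupp b u); [exists a, b | exists (hsupp a), (hsupp b)].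
Qed.

Lemma virtual_supp_gpair n (f : 'rV[R]_n -> R) : virtual_supp f ->
  exists2 y, is_gpair y & gpair_supp y f.
Proof.
move=> [a [b [a_ne b_ne fE]]]; exists (@conv_hull R n a, @conv_hull R n b).
  by split; [exists a | exists b]; split=> //; apply/eqP.
by exists (hsupp a), (hsupp b); split=> //; exact: polytope_supp_hull.
Qed.

Lemma gpair_supp_ext n (x : gpair R n) f g :
  gpair_supp x f -> (forall u, f u = g u) -> gpair_supp x g.
Proof. by move=> [f1 [f2 [s1 s2 fE]]] fg; exists f1, f2; split=> // u; rewrite -fg. Qed.

Lemma gpair_supp_gzero n : gpair_supp (gzero R n) (fun _ => 0).
Proof. by apply: gpair_supp_ext (gpair_supp_gpt 0) _ => u; rewrite dotz0. Qed.

Lemma gpair_supp_id_plus_star n (x : gpair R n) f : gpair_supp x f ->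
  gpair_supp (id_plus_star x) (fun u => f u + f (- u)).
Proof. by move=> xf; apply: gpair_supp_gadd xf (gpair_supp_gstar xf). Qed.

Lemma gpair_supp_id_minus_star n (x : gpair R n) f : gpair_supp x f ->
  gpair_supp (id_minus_star x) (fun u => f u - f (- u)).
Proof. by move=> xf; apply: gpair_supp_gadd xf (gpair_supp_gopp (gpair_supp_gstar xf)). Qed.

Lemma odd_fun_image n (f : 'rV[R]_n -> R) : virtual_supp f -> odd_fun f ->
  exists2 y, is_gpair y & gpair_supp (id_minus_star y) f.
Proof.
move=> vf fodd; have [g vg fg] := odd_virtual_supp_split vf fodd.
have [y yP yg] := virtual_supp_gpair vg.
by exists y => //; apply: gpair_supp_ext (gpair_supp_id_minus_star yg) _.
Qed.

Lemma id_plus_star_eq0 n (x : gpair R n) f : gpair_supp x f ->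
  gr_eq (id_plus_star x) (gzero R n) <-> odd_fun f.
Proof.
move=> xf; apply: iff_trans (gr_eq_supp (gpair_supp_id_plus_star xf) (gpair_supp_gzero n)) _.
by split=> fodd u; have := fodd u; lra.
Qed.

Lemma id_plus_star_eqT0 n (x : gpair R n) f : gpair_supp x f ->
  gTeq (id_plus_star x) (gzero R n) <-> odd_fun f.
Proof.
move=> xf; apply: iff_trans (gTeq_supp (gpair_supp_id_plus_star xf) (gpair_supp_gzero n)) _.
split=> [[h fh] u|fodd]; last by exists 0 => u; rewrite dotz0 fodd; ring.
by have := fh u; have := fh (- u); rewrite opprK dotNz; lra.
Qed.

Lemma id_minus_star_im n (x : gpair R n) f : virtual_supp f -> gpair_supp x f ->
  (exists y, is_gpair y /\ gr_eq x (id_minus_star y)) <-> odd_fun f.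
Proof.
move=> vf xf; split=> [[y [/is_gpair_supp [g _ yg] xy]] u|].
  have fg := (gr_eq_supp xf (gpair_supp_id_minus_star yg)).1 xy.
  by rewrite !fg opprK; ring.
move=> /(odd_fun_image vf) [y yP yf]; exists y; split=> //.
exact/(gr_eq_supp xf yf).
Qed.

Lemma id_minus_star_imT n (x : gpair R n) f : virtual_supp f -> gpair_supp x f ->
  (exists y, is_gpair y /\ gTeq x (id_minus_star y)) <-> odd_fun f.
Proof.
move=> vf xf; split=> [[y [/is_gpair_supp [g _ yg] xy]] u|].
  have [h fg] := (gTeq_supp xf (gpair_supp_id_minus_star yg)).1 xy.
  by rewrite !fg opprK dotNz; ring.
move=> /(odd_fun_image vf) [y yP yf]; exists y; split=> //.
by apply/(gTeq_supp xf yf); exists 0 => u; rewrite dotz0 addr0.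
Qed.

End SupportFunctions.

Theorem theorem6p3 (R : realFieldType) (n : nat) :
  (forall x : gpair R n, is_gpair x ->
     (gr_eq (id_plus_star x) (@gzero R n) <->
      exists y : gpair R n, is_gpair y /\ gr_eq x (id_minus_star y))) /\
  (forall x : gpair R n, is_gpair x ->
     (gTeq (id_plus_star x) (@gzero R n) <->
      exists y : gpair R n, is_gpair y /\ gTeq x (id_minus_star y))).
Proof.
split=> x /is_gpair_supp [f vf xf].
  exact: iff_trans (id_plus_star_eq0 xf) (iff_sym (id_minus_star_im vf xf)).
exact: iff_trans (id_plus_star_eqT0 xf) (iff_sym (id_minus_star_imT vf xf)).
Qed.
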